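(* Let $K$ be a finite field of characteristic $p$ and order $q$, let $s$ be a positive integer with $\gcd(s,q-1)=1$, and let $\tau$ be the permutation of $\mathcal{W}_{K,s}$ defined below. Then $\tau$ is a single cycle (i.e., a cycle containing all elements of $\mathcal{W}_{K,s}$) if and only if $K=\mathbb{F}_2$; in that case $s$ is degenerate and $\tau$ is a $1$-cycle.
   Context: $\zeta=\exp(2\pi i/p)$, $\psi(x)=\zeta^{\mathrm{Tr}(x)}$ with $\mathrm{Tr}$ the absolute trace of $K$ to $\mathbb{F}_p$; $W_u=\sum_{x\in K}\psi(x^s-ux)$; $\mathcal{W}_{K,s}=\{W_u:u\in K^\times\}$. Let $\gamma$ be a primitive element of $\mathbb{F}_p$ and $\sigma\in\mathrm{Gal}(\mathbb{Q}(\zeta)/\mathbb{Q})$ with $\sigma(\zeta)=\zeta^\gamma$; it is known that $\sigma(W_u)=W_{\gamma^{1-1/s}u}$ (with $1/s$ the inverse of $s$ mod $p-1$), so $\sigma$ restricts to a permutation $\tau$ of $\mathcal{W}_{K,s}$. The exponent $s$ is degenerate over $K$ if $s\equiv p^k\pmod{q-1}$ for some integer $k$. *)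

From mathcomp Require Import all_boot all_order all_algebra all_field.
Set Implicit Arguments. Unset Strict Implicit. Unset Printing Implicit Defensive.
Import GRing.Theory Num.Theory.
Local Open Scope ring_scope.

(* Absolute trace of K over its prime field F_p: Tr(x) = sum_{i < n} x^(p^i),
   where #|K| = p^n (n = logn p #|K|). The value lies in the prime subfield. *)
Definition abs_trace (K : finFieldType) (p : nat) (x : K) : K :=
  \sum_(i < logn p #|K|) x ^+ (p ^ i).

Definition trace_nat (K : finFieldType) (p : nat) (x : K) : nat :=
  find (fun k : nat => k%:R == abs_trace p x) (iota 0 p).

Definition psi (K : finFieldType) (p : nat) (zeta : algC) (x : K) : algC :=
  zeta ^+ trace_nat p x.

Definition Wsum (K : finFieldType) (p : nat) (zeta : algC) (s : nat) (u : K)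
  : algC := \sum_(x : K) psi p zeta (x ^+ s - u * x).

Definition Wset (K : finFieldType) (p : nat) (zeta : algC) (s : nat)
  : seq algC := undup [seq Wsum p zeta s u | u <- enum K & u != 0].

Definition single_cycle (f : algC -> algC) (S : seq algC) : Prop :=
  forall w w', w \in S -> w' \in S -> exists n : nat, iter n f w = w'.

Definition degenerate (K : finFieldType) (p s : nat) : Prop :=
  exists k : nat, s = p ^ k %[mod #|K|.-1].

From mathcomp Require Import all_boot all_order all_algebra all_field.
From mathcomp Require Import ring zify.
Import GRing.Theory Num.Theory.
Local Open Scope ring_scope.
Set Implicit Arguments. Unset Strict Implicit. Unset Printing Implicit Defensive.

(* sigma maps W_u to W_(c u) for a fixed c != 0, so it permutes the multiset of the W_u
   (u != 0).  If it is transitive on the values, they all have the same multiplicity m;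
   as the W_u sum to q and the sum of the distinct values is an algebraic integer, m
   divides both q and q - 1, so the q - 1 values are distinct.  But sigma^h, with
   h = max(1, (p-1)/2), negates the trace, and the substitution x -> -x shows that it
   fixes every W_u, so the cycle has length at most h < q - 1 unless q = 2, where the
   only value is W_1 = 2. *)

Lemma eqr_nat_pchar (R : nzRingType) (p a b : nat) : p \in [pchar R] ->
  (a%:R == b%:R :> R) = (a == b %[mod p]).
Proof.
move=> pcharRp; wlog le_ba : a b / (b <= a)%N.
  by move=> IH; case/orP: (leq_total b a) => /IH //; rewrite eq_sym [RHS]eq_sym.
by rewrite -subr_eq0 -natrB // -(dvdn_pcharf pcharRp) eqn_mod_dvd.
Qed.

Section AbsoluteTrace.
Variables (K : finFieldType) (p : nat).
Hypothesis pcharKp : p \in [pchar K].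

Local Notation Tr := (@abs_trace K p).

Lemma logn_card_gt0 : (0 < logn p #|K|)%N.
Proof.
rewrite lt0n; apply: contraTneq (finNzRing_gt1 K) => n0.
by rewrite (card_pprimeChar pcharKp) n0.
Qed.

Lemma exprD_pexpn i (x y : K) : (x + y) ^+ (p ^ i) = x ^+ (p ^ i) + y ^+ (p ^ i).
Proof.
rewrite exprDn_pchar // pnatX (eq_pnat _ (pcharf_eq pcharKp)).
by rewrite pnat_id ?(pcharf_prime pcharKp).
Qed.

Lemma abs_traceD x y : Tr (x + y) = Tr x + Tr y.
Proof. by rewrite /abs_trace -big_split; apply: eq_bigr => i _; rewrite exprD_pexpn. Qed.

Lemma abs_trace_natrM k x : Tr (k%:R * x) = k%:R * Tr x.
Proof.
rewrite /abs_trace mulr_sumr; apply: eq_bigr => i _; rewrite exprMn; congr (_ * _).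
case: i => i _ /=; elim: i => [|i IH]; first by rewrite expn0 expr1.
by rewrite expnSr exprM IH -(pFrobenius_autE pcharKp) rmorph_nat.
Qed.

Lemma abs_trace_pFrobenius x : Tr x ^+ p = Tr x.
Proof.
have xq : x ^+ (p ^ logn p #|K|) = x by rewrite -(card_pprimeChar pcharKp) expf_card.
rewrite /abs_trace -(pFrobenius_autE pcharKp) rmorph_sum /=.
move: logn_card_gt0 xq; case: (logn p #|K|) => // n _ xq.
rewrite big_ord_recr big_ord_recl /= pFrobenius_autE -exprM -expnSr xq expn0 addrC.
by congr (_ + _); apply: eq_bigr => i _; rewrite pFrobenius_autE -exprM -expnSr.
Qed.

(* Tr is a polynomial function of degree p^(n-1) < #|K|, so it cannot vanish on all of K. *)
Lemma abs_trace_neq0 : exists x, Tr x != 0.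
Proof.
have [x Trx | Tr0] := pickP (fun x => Tr x != 0); first by exists x.
have p_gt1 := prime_gt1 (pcharf_prime pcharKp).
have [n nE] : exists n, logn p #|K| = n.+1.
  by exists (logn p #|K|).-1; rewrite prednK ?logn_card_gt0.
have cardK : #|K| = (p ^ n.+1)%N by rewrite -nE; exact: card_pprimeChar.
pose P : {poly K} := \sum_(i < n.+1) 'X^(p ^ i).
have size_low : (size (\sum_(i < n) 'X^(p ^ i) : {poly K})%R < (p ^ n).+1)%N.
  rewrite ltnS; apply: leq_trans (size_sum _ _ _) _.
  by apply/bigmax_leqP => i _; rewrite size_polyXn ltn_exp2l.
have size_P : size P = (p ^ n).+1.
  by rewrite /P big_ord_recr /= addrC size_polyDl // size_polyXn.
have P_neq0 : P != 0 by rewrite -size_poly_eq0 size_P.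
have rootP : all (root P) (enum K).
  apply/allP => x _; rewrite /root /P horner_sum; apply/eqP.
  rewrite -[RHS](eqP (negbFE (Tr0 x))) /abs_trace nE.
  by apply: eq_bigr => i _; rewrite hornerXn.
have := max_poly_roots P_neq0 rootP (enum_uniq _).
by rewrite size_P -cardE cardK expnS ltnS leqNgt ltn_Pmull // expn_gt0 ltnW.
Qed.

Lemma pFrobenius_fixed_natr (y : K) : y ^+ p = y -> exists2 k, (k < p)%N & k%:R = y.
Proof.
move=> yp; have p_gt1 := prime_gt1 (pcharf_prime pcharKp).
pose P : {poly K} := 'X^p - 'X.
have size_P : size P = p.+1.
  by rewrite size_polyDl ?size_polyXn // size_polyN size_polyX ltnS.
have rootP z : z ^+ p = z -> root P z by rewrite /root !hornerE => ->; rewrite subrr.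
pose rs := [seq (k%:R : K) | k <- iota 0 p].
have [/mapP [k] | yNrs] := boolP (y \in rs).
  by rewrite mem_iota => /andP [_ lt_kp] ->; exists k.
have uniq_rs : uniq rs.
  rewrite map_inj_in_uniq ?iota_uniq // => a b; rewrite !mem_iota !add0n => lt_ap lt_bp /eqP.
  by rewrite (eqr_nat_pchar _ _ pcharKp) !modn_small // => /eqP.
have rootP_rs : all (root P) (y :: rs).
  rewrite /= rootP //=; apply/allP => _ /mapP [k _ ->].
  by apply: rootP; rewrite -(pFrobenius_autE pcharKp) rmorph_nat.
have P_neq0 : P != 0 by rewrite -size_poly_eq0 size_P.
have := max_poly_roots P_neq0 rootP_rs; rewrite /= yNrs uniq_rs size_map size_iota size_P.
by rewrite ltnn => /(_ isT).
Qed.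

Lemma trace_natE x : (trace_nat p x)%:R = Tr x.
Proof.
have [k lt_kp kE] := pFrobenius_fixed_natr (abs_trace_pFrobenius x).
have hasTr : has (fun k : nat => k%:R == Tr x) (iota 0 p).
  by apply/hasP; exists k; rewrite ?mem_iota ?kE.
have := hasTr; rewrite has_find size_iota => lt_Tr_p.
by have /eqP := nth_find 0 hasTr; rewrite nth_iota.
Qed.

End AbsoluteTrace.

Section AdditiveCharacter.
Variables (K : finFieldType) (p : nat) (zeta : algC).
Hypotheses (pcharKp : p \in [pchar K]) (zeta_prim : p.-primitive_root zeta).

Local Notation psi := (@psi K p zeta).

Lemma psiE t y : t%:R = abs_trace p y -> psi y = zeta ^+ t.
Proof.
rewrite -trace_natE // => /eqP; rewrite (eqr_nat_pchar _ _ pcharKp) => /eqP tE.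
by rewrite /psi -(prim_expr_mod zeta_prim) -tE prim_expr_mod.
Qed.

Lemma psiD x y : psi (x + y) = psi x * psi y.
Proof.
rewrite (@psiE (trace_nat p x + trace_nat p y)) ?exprD // natrD.
by rewrite !(trace_natE pcharKp) (abs_traceD pcharKp).
Qed.

Lemma psi_natrM k y : psi (k%:R * y) = psi y ^+ k.
Proof.
rewrite (@psiE (trace_nat p y * k)) ?exprM // natrM.
by rewrite (trace_natE pcharKp) (abs_trace_natrM pcharKp) mulrC.
Qed.

Lemma psi0 : psi 0 = 1.
Proof. by have := psi_natrM 0 0; rewrite mul0r expr0. Qed.

Lemma psi_Aint y : psi y \in Aint.
Proof. by rewrite rpredX // (Aint_prim_root zeta_prim). Qed.

Lemma sum_psi : \sum_y psi y = 0.
Proof.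
have [y0 Tr_y0] := abs_trace_neq0 pcharKp.
have psi_y0 : psi y0 != 1.
  by rewrite /psi -(prim_order_dvd zeta_prim) (dvdn_pcharf pcharKp) (trace_natE pcharKp).
have shift : \sum_y psi y = psi y0 * \sum_y psi y.
  rewrite {1}(reindex_inj (addIr y0)) mulr_sumr /=.
  by apply: eq_bigr => y _; rewrite psiD mulrC.
have : (1 - psi y0) * \sum_y psi y == 0 by rewrite mulrBl mul1r -shift subrr.
by rewrite mulf_eq0 subr_eq0 eq_sym (negbTE psi_y0) => /eqP.
Qed.

Lemma sum_psiM z : z != 0 -> \sum_u psi (u * z) = 0.
Proof. by move=> z_neq0; have := sum_psi; rewrite (reindex_inj (mulIf z_neq0)). Qed.

End AdditiveCharacter.

Section CoprimePower.
Variables (K : finFieldType) (s : nat).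
Hypotheses (s_gt0 : (0 < s)%N) (coprime_s : coprime s #|K|.-1).

Lemma expr_coprime_inj : injective (fun x : K => x ^+ s).
Proof.
have [[a b] /= abE] := coprimeP _ s_gt0 coprime_s.
have asE : (a * s = b * #|K|.-1 + 1)%N by rewrite -abE addnC subnK // ltnW // -subn_gt0 abE.
suff expr_as (x : K) : (x ^+ s) ^+ a = x by move=> x y /= xy; rewrite -[x]expr_as xy expr_as.
rewrite -exprM mulnC asE exprD expr1.
have [-> | x_neq0] := eqVneq x 0; first by rewrite mulr0.
have xq1 : x ^+ #|K|.-1 = 1.
  apply: (mulfI x_neq0); rewrite mulr1 -exprS prednK ?expf_card //.
  exact: ltnW (finNzRing_gt1 K).
by rewrite mulnC exprM xq1 expr1n mul1r.
Qed.

Lemma exprN1_coprime : (-1 : K) ^+ s = -1.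
Proof.
have : ((-1 : K) ^+ s) ^+ 2 == 1 by rewrite exprAC sqrrN expr1n expr1n.
rewrite sqrf_eq1 => /orP [/eqP N1s | /eqP //].
by rewrite N1s; apply: expr_coprime_inj; rewrite /= N1s expr1n.
Qed.

End CoprimePower.

Lemma count_map_scale (K : finFieldType) (T : eqType) (f : K -> T) (e : T -> T) (c : K) :
    injective e -> c != 0 -> (forall u, e (f u) = f (c * u)) ->
  forall x, count_mem (e x) [seq f u | u <- enum K & u != 0]
          = count_mem x [seq f u | u <- enum K & u != 0].
Proof.
move=> e_inj c_neq0 efE x; set U := [seq u <- enum K | u != 0].
have U_scale : perm_eq U [seq c * u | u <- U].
  have U_uniq : uniq U by rewrite filter_uniq ?enum_uniq.
  apply: uniq_perm; rewrite ?(map_inj_uniq (mulfI c_neq0)) // => y.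
  rewrite mem_filter mem_enum andbT; apply/idP/mapP => [y_neq0 | [u]].
    exists (c^-1 * y); last by rewrite mulrA divff // mul1r.
    by rewrite mem_filter mem_enum andbT mulf_neq0 ?invr_eq0.
  by rewrite mem_filter mem_enum andbT => u_neq0 ->; rewrite mulf_neq0.
rewrite !count_map (permP U_scale) count_map; apply: eq_count => u /=.
by rewrite -efE (inj_eq e_inj).
Qed.

Definition Wlist (K : finFieldType) (p : nat) (zeta : algC) (s : nat) : seq algC :=
  [seq Wsum p zeta s u | u <- enum K & u != 0].

Lemma WsetE (K : finFieldType) p zeta s : Wset K p zeta s = undup (Wlist K p zeta s).
Proof. by []. Qed.

Lemma size_Wlist (K : finFieldType) p zeta s : size (Wlist K p zeta s) = #|K|.-1.
Proof.
rewrite size_map size_filter.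
have := count_predC (pred1 (0 : K)) (enum K).
by rewrite -cardE (count_uniq_mem _ (enum_uniq K)) mem_enum add1n => <-.
Qed.

Lemma Wsum_Aint (K : finFieldType) p zeta s u :
  p.-primitive_root zeta -> @Wsum K p zeta s u \in Aint.
Proof. by move=> zeta_prim; apply: rpred_sum => x _; apply: psi_Aint. Qed.

Section WeilSum.
Variables (K : finFieldType) (p s : nat) (zeta : algC).
Hypotheses (pcharKp : p \in [pchar K]) (zeta_prim : p.-primitive_root zeta).
Hypotheses (s_gt0 : (0 < s)%N) (coprime_s : coprime s #|K|.-1).

Local Notation W := (@Wsum K p zeta s).
Local Notation psi := (@psi K p zeta).

Lemma Wsum0 : W 0 = 0.
Proof.
rewrite -(sum_psi pcharKp zeta_prim) (reindex_inj (expr_coprime_inj s_gt0 coprime_s)).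
by apply: eq_bigr => x _; rewrite mul0r subr0.
Qed.

Lemma sum_Wsum : \sum_(u | u != 0) W u = #|K|%:R.
Proof.
have sum_all : \sum_u W u = #|K|%:R.
  rewrite /Wsum exchange_big /= (bigD1 0) //= [X in _ + X]big1 ?addr0 => [|x x_neq0].
    rewrite -sumr_const; apply: eq_bigr => u _.
    by rewrite expr0n gtn_eqF // mulr0 subr0 (psi0 pcharKp zeta_prim).
  under eq_bigr => u _ do rewrite (psiD pcharKp zeta_prim) -mulrN.
  by rewrite -mulr_sumr (sum_psiM pcharKp zeta_prim) ?oppr_eq0 ?mulr0.
by rewrite -sum_all [RHS](bigD1 0) //= Wsum0 add0r.
Qed.

Lemma sum_Wlist : \sum_(w <- Wlist K p zeta s) w = #|K|%:R.
Proof. by rewrite big_map big_filter big_enum_cond /= sum_Wsum. Qed.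

Lemma Wset_card2 : #|K| = 2%N -> Wset K p zeta s = [:: 2%:R].
Proof.
rewrite WsetE => q2.
move: sum_Wlist (size_Wlist K p zeta s); rewrite q2.
by case: (Wlist K p zeta s) => [|w []] //=; rewrite big_seq1 => ->.
Qed.

Variables (sigma : {rmorphism algC -> algC}) (g : nat).
Hypothesis sigma_zeta : sigma zeta = zeta ^+ g.

Lemma rmorph_psi y : sigma (psi y) = psi (g%:R * y).
Proof. by rewrite (psi_natrM pcharKp zeta_prim) /psi rmorphXn sigma_zeta exprAC. Qed.

Lemma iter_rmorph_Wsum k u :
  iter k sigma (W u) = \sum_x psi ((g ^ k)%:R * (x ^+ s - u * x)).
Proof.
elim: k => [|k IH]; first by apply: eq_bigr => x _; rewrite expn0 mul1r.
rewrite iterS IH rmorph_sum; apply: eq_bigr => x _.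
by rewrite rmorph_psi mulrA -natrM -expnS.
Qed.

(* With a ^+ s = g^-1, the substitution x = a y turns g (x^s - u x) into y^s - (g a u) y. *)
Lemma rmorph_Wsum : (g%:R : K) != 0 ->
  exists2 c : K, c != 0 & forall u, sigma (W u) = W (c * u).
Proof.
move=> g_neq0; have [root_s _ root_sK] := injF_bij (expr_coprime_inj s_gt0 coprime_s).
pose a := root_s (g%:R^-1); have aE : a ^+ s = g%:R^-1 := root_sK _.
have a_neq0 : a != 0.
  by apply: contra_neq (invr_neq0 g_neq0) => a0; rewrite -aE a0 expr0n gtn_eqF.
exists (g%:R * a) => [|u]; first by rewrite mulf_neq0.
rewrite -[sigma _]/(iter 1 sigma _) iter_rmorph_Wsum expn1.
rewrite (reindex_inj (mulfI a_neq0)); apply: eq_bigr => y _; congr psi.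
by rewrite exprMn aE; field.
Qed.

Lemma iter_rmorph_Wsum_id h u : (g ^ h)%:R = -1 :> K -> iter h sigma (W u) = W u.
Proof.
move=> ghE; rewrite iter_rmorph_Wsum ghE (reindex_inj oppr_inj).
apply: eq_bigr => x _; congr psi.
have -> : (- x) ^+ s = - x ^+ s.
  by rewrite -mulN1r exprMn (exprN1_coprime s_gt0 coprime_s) mulN1r.
by ring.
Qed.

Lemma count_Wlist_rmorph : (g%:R : K) != 0 ->
  forall x, count_mem (sigma x) (Wlist K p zeta s) = count_mem x (Wlist K p zeta s).
Proof.
move=> /rmorph_Wsum [c c_neq0 sigmaW].
exact: count_map_scale (fmorph_inj sigma) c_neq0 sigmaW.
Qed.

End WeilSum.

Section ConstantCount.
Variables (T : eqType) (L : seq T) (m : nat).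
Hypothesis cL : {in L, forall w, count_mem w L = m}.

Lemma size_const_count : size L = (size (undup L) * m)%N.
Proof.
rewrite -(perm_size (perm_count_undup L)) size_flatten /shape -map_comp.
have -> : [seq size (nseq (count_mem w L) w) | w <- undup L] = nseq (size (undup L)) m.
  rewrite -(size_map (fun w => size (nseq (count_mem w L) w))).
  apply/all_pred1P/allP => x /mapP [w]; rewrite mem_undup => /cL cw ->.
  by rewrite /= size_nseq cw.
by rewrite sumn_nseq mulnC.
Qed.

Lemma big_const_count (V : nmodType) (F : T -> V) :
  \sum_(w <- L) F w = (\sum_(w <- undup L) F w) *+ m.
Proof.
rewrite -big_undup_iterop_count -sumrMnl big_seq [RHS]big_seq; apply: eq_bigr => w.
by rewrite mem_undup Monoid.iteropE iter_addr_0 => /cL ->.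
Qed.

End ConstantCount.

Lemma Aint_mulrn_dvdn (x : algC) m N : x \in Aint -> x *+ m = N%:R -> (m %| N)%N.
Proof.
have [-> _ /eqP | m_gt0 Ax xmN] := posnP m; first by rewrite mulr0n eq_sym pnatr_eq0 => /eqP ->.
have m_neq0 : (m%:R : algC) != 0 by rewrite pnatr_eq0 -lt0n.
have xE : x = N%:R / m%:R by rewrite -xmN -[x *+ m]mulr_natr mulfK.
have /natrP [k kE] : x \is a Num.nat.
  by rewrite natrEint Cint_rat_Aint // xE ?divr_ge0 ?ler0n // rpred_div ?rpred_nat.
move: xmN; rewrite kE -[_ *+ m]mulr_natr -natrM => /eqP.
by rewrite eqr_nat => /eqP <-; rewrite dvdn_mull.
Qed.

Lemma single_cycle_size_le (f : algC -> algC) (S : seq algC) h :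
    (0 < h)%N -> uniq S -> {in S, forall w, iter h f w = w} -> single_cycle f S ->
  (size S <= h)%N.
Proof.
case: S => [//|w0 S] h_gt0 S_uniq f_h cycle_f.
have w0_period j : iter (j * h) f w0 = w0.
  by elim: j => // j IH; rewrite mulSn iterD IH f_h ?mem_head.
rewrite -(size_iota 0 h) -(size_map (fun k => iter k f w0)); apply: uniq_leq_size => // w Sw.
have [k <-] := cycle_f w0 w (mem_head _ _) Sw; apply/mapP; exists (k %% h)%N.
  by rewrite mem_iota add0n ltn_pmod.
by rewrite {1}(divn_eq k h) addnC iterD w0_period.
Qed.

Section SingleCycle.
Variables (f : algC -> algC) (L : seq algC).
Hypothesis count_f : forall x, count_mem (f x) L = count_mem x L.

Lemma count_mem_single_cycle : single_cycle f (undup L) ->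
  {in L &, forall w w', count_mem w L = count_mem w' L}.
Proof.
move=> cycle_f w w' Lw Lw'.
have [k <-] : exists k, iter k f w' = w by apply: cycle_f; rewrite mem_undup.
by elim: k => //= k IH; rewrite count_f.
Qed.

(* The common multiplicity of the values divides both size L and size L + 1. *)
Lemma single_cycle_uniq : single_cycle f (undup L) -> {in L, forall w, w \in Aint} ->
  \sum_(w <- L) w = (size L).+1%:R -> uniq L.
Proof.
move=> cycle_f L_Aint sumL.
have [-> // | L_neq0] := eqVneq L [::].
have [w0 Lw0] : exists w0, w0 \in L by case: L L_neq0 => // w L' _; exists w; apply: mem_head.
set m := count_mem w0 L.
have cL : {in L, forall w, count_mem w L = m} by move=> w Lw; apply: count_mem_single_cycle.
have m_dvd_size : (m %| size L)%N by rewrite (size_const_count cL) dvdn_mull.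
have m_dvd_size1 : (m %| (size L).+1)%N.
  apply: (@Aint_mulrn_dvdn (\sum_(w <- undup L) w)); last by rewrite -(big_const_count cL).
  by rewrite big_seq; apply: rpred_sum => w; rewrite mem_undup => /L_Aint.
have m1 : m = 1%N.
  by apply/eqP; rewrite -dvdn1 -(eqnP (coprimenS (size L))) dvdn_gcd m_dvd_size.
apply: count_mem_uniq => w; have [Lw | /count_memPn -> //] := boolP (w \in L).
by rewrite cL.
Qed.

End SingleCycle.

(* [p./2] is [(p - 1) / 2] for odd [p], and [1] for [p = 2]. *)
Lemma prim_root_Fp_half (p g : nat) : prime p -> (p.-1).-primitive_root (g%:R : 'F_p) ->
  (p %| (g ^ p./2).+1)%N.
Proof.
move=> p_prime g_prim; have pcharFp := pchar_Fp p_prime.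
rewrite (dvdn_pcharf pcharFp) -natr1 natrX addr_eq0; apply/eqP.
set x := (g%:R : 'F_p) in g_prim *.
have [p2 | p_odd] := even_prime p_prime.
  have x1 : x = 1 by rewrite -[x]expr1 -[1%N]/(2.-1) -p2 prim_expr_order.
  apply/eqP; rewrite x1 expr1n -subr_eq0 opprK -[1 + 1]/(2%:R).
  by rewrite -(dvdn_pcharf pcharFp) p2.
have p_gt1 := prime_gt1 p_prime.
have half_twice : (p./2 * 2 = p.-1)%N.
  by rewrite -[in RHS](odd_double_half p) p_odd add1n muln2.
have : (x ^+ p./2) ^+ 2 == 1 by rewrite -exprM half_twice prim_expr_order.
rewrite sqrf_eq1 -(prim_order_dvd g_prim) => /orP [/dvdn_leq | /eqP //].
have half_gt0 : (0 < p./2)%N by lia.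
by move/(_ half_gt0); lia.
Qed.

Section SingleCycleWset.
Variables (K : finFieldType) (p s : nat) (zeta : algC) (g : nat).
Variable sigma : {rmorphism algC -> algC}.
Hypotheses (pcharKp : p \in [pchar K]) (s_gt0 : (0 < s)%N) (coprime_s : coprime s #|K|.-1).
Hypotheses (zeta_prim : p.-primitive_root zeta) (g_prim : (p.-1).-primitive_root (g%:R : 'F_p)).
Hypothesis sigma_zeta : sigma zeta = zeta ^+ g.
Hypothesis cycle_sigma : single_cycle sigma (Wset K p zeta s).

Local Notation Wl := (Wlist K p zeta s).

Lemma natr_prim_root_Fp_neq0 : (g%:R : K) != 0.
Proof.
have p_prime := pcharf_prime pcharKp.
rewrite -(dvdn_pcharf pcharKp) (dvdn_pcharf (pchar_Fp p_prime)) (prim_root_eq0 g_prim).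
by rewrite -lt0n -subn1 subn_gt0 prime_gt1.
Qed.

Lemma uniq_Wlist_single_cycle : uniq Wl.
Proof.
apply: (single_cycle_uniq (L := Wl) _ cycle_sigma).
- move=> x; have g_neq0 := natr_prim_root_Fp_neq0.
  by rewrite (count_Wlist_rmorph pcharKp zeta_prim s_gt0 coprime_s sigma_zeta g_neq0).
- by move=> w /mapP [u _ ->]; apply: Wsum_Aint.
- by rewrite sum_Wlist // size_Wlist prednK // ltnW ?finNzRing_gt1.
Qed.

Lemma size_Wset_single_cycle : (size (Wset K p zeta s) <= p./2)%N.
Proof.
have g_half : (g ^ p./2)%:R = -1 :> K.
  apply/eqP; rewrite -addr_eq0 natr1 -(dvdn_pcharf pcharKp).
  exact: prim_root_Fp_half (pcharf_prime pcharKp) g_prim.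
rewrite WsetE; apply: single_cycle_size_le (undup_uniq _) _ cycle_sigma.
  by rewrite -divn2 divn_gt0 // prime_gt1 ?(pcharf_prime pcharKp).
move=> w; rewrite mem_undup => /mapP [u _ ->].
by rewrite (iter_rmorph_Wsum_id pcharKp zeta_prim s_gt0 coprime_s sigma_zeta u g_half).
Qed.

Lemma card_single_cycle : #|K| = 2%N.
Proof.
apply/eqP; apply: contraT => q_neq2.
have p_dvd_q : (p %| #|K|)%N.
  by have := logn_card_gt0 pcharKp; rewrite logn_gt0 mem_primes => /and3P [].
have := half_leq (dvdn_leq (ltnW (finNzRing_gt1 K)) p_dvd_q).
have := size_Wset_single_cycle; rewrite WsetE.
rewrite undup_id ?uniq_Wlist_single_cycle // size_Wlist -!divn2.
by move: (finNzRing_gt1 K) q_neq2; set q := #|K|; lia.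
Qed.

End SingleCycleWset.

Theorem proposition2p5 (K : finFieldType) (p s : nat) (zeta : algC) (g : nat)
  (sigma : {rmorphism algC -> algC}) :
  p \in [pchar K] ->
  (0 < s)%N ->
  coprime s #|K|.-1 ->
  p.-primitive_root zeta ->
  (p.-1).-primitive_root (g%:R : 'F_p) ->
  sigma zeta = zeta ^+ g ->
  (single_cycle sigma (Wset K p zeta s) <-> #|K| = 2%N) /\
  (#|K| = 2%N ->
     degenerate K p s /\ size (Wset K p zeta s) = 1%N /\
     (forall w, w \in Wset K p zeta s -> sigma w = w)).
Proof.
move=> pcharKp s_gt0 coprime_s zeta_prim g_prim sigma_zeta.
have Wset2 := Wset_card2 pcharKp zeta_prim s_gt0 coprime_s.
split; first split.
- exact: card_single_cycle pcharKp s_gt0 coprime_s zeta_prim g_prim sigma_zeta.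
- by move=> /Wset2 -> w w'; rewrite !inE => /eqP -> /eqP ->; exists 0%N.
move=> q2; rewrite Wset2 //; split; first by exists 0%N; rewrite q2 !modn1.
by split => // w; rewrite inE => /eqP ->; apply: rmorph_nat.
Qed.
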